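(* Let $V$ be an irreducible module of the Clifford algebra $\mathrm{Cl}_{r,s}$, with representation $J\colon\mathrm{Cl}_{r,s}\to\mathrm{End}(V)$, $J_z^2=-\langle z,z\rangle_{\mathbb R^{r,s}}\mathrm{Id}_V$ for $z\in\mathbb R^{r,s}$, and let $\langle\cdot\,,\cdot\rangle_V\colon V\times V\to\mathbb R$ be a symmetric bilinear form satisfying $\langle J_zv,w\rangle_V+\langle v,J_zw\rangle_V=0$ for all $z\in\mathbb R^{r,s}$ and all $v,w\in V$. Then $\langle\cdot\,,\cdot\rangle_V$ is either non-degenerate or identically zero.
   Context: $\mathbb R^{r,s}$ is $\mathbb R^{r+s}$ with the symmetric bilinear form whose quadratic form is $x_1^2+\dots+x_r^2-x_{r+1}^2-\dots-x_{r+s}^2$, and $\mathrm{Cl}_{r,s}$ is the real Clifford algebra generated by $\mathbb R^{r,s}$ with relation $z^2=-\langle z,z\rangle_{\mathbb R^{r,s}}\cdot 1$. A $\mathrm{Cl}_{r,s}$-module is a real vector space with an algebra homomorphism $J\colon\mathrm{Cl}_{r,s}\to\mathrm{End}(V)$, $z\mapsto J_z$. *)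

From HB Require Import structures.
From mathcomp Require Import all_boot all_order all_algebra.
From mathcomp Require Import reals.

Set Implicit Arguments. Unset Strict Implicit. Unset Printing Implicit Defensive.
Import Order.TTheory GRing.Theory Num.Theory.
Local Open Scope ring_scope.

Definition qform (R : realType) (r s : nat) (z : 'rV[R]_(r + s)) : R :=
  \sum_(i < r + s) (if (i < r)%N then z 0 i ^+ 2 else - z 0 i ^+ 2).

(* A Cl_{r,s}-module structure on V = 'rV[R]_n (vectors act on the right:
   J_z v := v *m J z).  By the universal property of Cl_{r,s}, an algebra
   homomorphism Cl_{r,s} -> End(V) is the same as a linear map
   z |-> J_z with J_z^2 = - <z,z> Id. *)
Definition cl_module (R : realType) (r s n : nat)
    (J : 'rV[R]_(r + s) -> 'M[R]_n) : Prop :=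
  (forall (a : R) (z1 z2 : 'rV[R]_(r + s)), J (a *: z1 + z2) = a *: J z1 + J z2) /\
  (forall z : 'rV[R]_(r + s), J z *m J z = - (qform z)%:M).

(* Irreducible: V is nonzero and the only subspaces of V invariant under all
   J_z (equivalently under the image of Cl_{r,s}) are 0 and V. *)
Definition cl_irreducible (R : realType) (r s n : nat)
    (J : 'rV[R]_(r + s) -> 'M[R]_n) : Prop :=
  (0 < n)%N /\
  forall U : 'M[R]_n, (forall z, stablemx U (J z)) ->
    (U == (0 : 'M[R]_n))%MS \/ (U == (1%:M : 'M[R]_n))%MS.

Definition bform (R : realType) (n : nat) (B : 'M[R]_n) (v w : 'rV[R]_n) : R :=
  (v *m B *m w^T) 0 0.

Definition bform_nondegenerate (R : realType) (n : nat) (B : 'M[R]_n) : Prop :=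
  forall v : 'rV[R]_n, (forall w, bform B v w = 0) -> v = 0.

From HB Require Import structures.
From mathcomp Require Import all_boot all_order all_algebra.
From mathcomp Require Import reals.

Import Order.TTheory GRing.Theory Num.Theory.
Local Open Scope ring_scope.

(* The left radical of the form, i.e. the kernel of B, is invariant under
   every J_z because J_z is skew-adjoint; irreducibility forces it to be
   0 (non-degenerate form) or all of V (zero form). *)

Section LeftRadical.

Variables (R : realType) (n : nat) (B : 'M[R]_n).

Lemma row_orthogonal_eq0 (x : 'rV[R]_n) :
  (forall w : 'rV[R]_n, (x *m w^T) 0 0 = 0) -> x = 0.
Proof.
move=> xw0; apply/rowP => j; rewrite mxE.
by have := xw0 (delta_mx 0 j); rewrite trmx_delta -colE mxE.
Qed.

Lemma bform_eq0lP (v : 'rV[R]_n) :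
  (forall w, bform B v w = 0) <-> v *m B = 0.
Proof.
split=> [vw0 | vB0 w]; first exact: row_orthogonal_eq0.
by rewrite /bform vB0 mul0mx mxE.
Qed.

Lemma kermx_bform_stable (A : 'M[R]_n) :
  (forall v w, bform B (v *m A) w + bform B v (w *m A) = 0) ->
  stablemx (kermx B) A.
Proof.
move=> A_skew; apply/sub_kermxP/row_matrixP => i.
have kerB_i : row i (kermx B) *m B = 0 by rewrite -row_mul mulmx_ker row0.
rewrite 2!row_mul row0; apply/bform_eq0lP => w.
have := A_skew (row i (kermx B)) w.
by rewrite (proj2 (bform_eq0lP _) kerB_i) addr0.
Qed.

End LeftRadical.

Theorem lemma2p2 (R : realType) (r s n : nat)
    (J : 'rV[R]_(r + s) -> 'M[R]_n) (B : 'M[R]_n) :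
  cl_module J -> cl_irreducible J ->
  (forall v w : 'rV[R]_n, bform B v w = bform B w v) ->
  (forall (z : 'rV[R]_(r + s)) (v w : 'rV[R]_n),
      bform B (v *m J z) w + bform B v (w *m J z) = 0) ->
  bform_nondegenerate B \/ (forall v w : 'rV[R]_n, bform B v w = 0).
Proof.
move=> _ [_ irrJ] _ J_skew.
have kerB_stable z : stablemx (kermx B) (J z) by exact: kermx_bform_stable.
case: (irrJ _ kerB_stable) => /andP[kerB_le0 kerB_ge1]; [left | right].
- move=> v /bform_eq0lP /sub_kermxP v_ker; apply/eqP; rewrite -submx0.
  exact: submx_trans v_ker kerB_le0.
- move=> v; apply/bform_eq0lP/sub_kermxP.
  exact: submx_trans (submx1 v) kerB_ge1.
Qed.
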